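(* Let $h>0$ and let $T_h$ be the complete binary tree of height $h$ (with $2^{h+1}-1$ nodes), viewed as a Cartesian tree. Then $|ng(T_h)|=6(2^h-1)-2h$.
   Context: Heights are counted so that a single leaf is the complete binary tree of height $0$. Sequences are finite sequences of pairwise distinct integers indexed from $1$. The Cartesian tree $C(x)$ of a sequence $x$ of length $n$ is empty if $n=0$; otherwise, if $x[i]$ is the minimum of $x$, it is the binary tree with root $i$, left subtree $C(x[1\ldots i-1])$ and right subtree $C(x[i+1\ldots n])$; every binary tree with $n$ nodes is a Cartesian tree. For $1\le i\le n-1$, $\tau(x,i)$ is obtained from $x$ by exchanging $x[i]$ and $x[i+1]$. For a Cartesian tree $T$ with $n$ nodes, $ng(T,i)=\{C(\tau(x,i)) : C(x)=T\}$ for $1\le i\le n-1$ and $ng(T)=\bigcup_{i=1}^{n-1}ng(T,i)$. *)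

From HB Require Import structures.
From mathcomp Require Import all_boot all_order all_algebra.
Set Implicit Arguments. Unset Strict Implicit. Unset Printing Implicit Defensive.
Import Order.TTheory GRing.Theory Num.Theory.

Inductive tree := E | N of tree & tree.

Fixpoint eqtree (t u : tree) : bool :=
  match t, u with
  | E, E => true
  | N l r, N l' r' => eqtree l l' && eqtree r r'
  | _, _ => false
  end.

Lemma eqtreeP : Equality.axiom eqtree.
Proof.
elim=> [|l IHl r IHr] [|l' r'] /=; try by constructor.
case: (IHl l') => [->|nl]; last by constructor=> -[].
case: (IHr r') => [->|nr]; last by constructor=> -[].
by constructor.
Qed.

HB.instance Definition _ := hasDecEq.Build tree eqtreeP.

Fixpoint tsize (t : tree) : nat :=
  match t with E => 0 | N l r => (tsize l + tsize r).+1 end.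

(* complete binary tree of height h (height 0 = a single node) *)
Fixpoint complete (h : nat) : tree :=
  match h with 0 => N E E | h'.+1 => N (complete h') (complete h') end.

Definition minseq (a : int) (s : seq int) : int :=
  foldr (fun y m => if (y < m)%R then y else m) a s.

(* Cartesian tree, with fuel (fuel = length suffices) *)
Fixpoint ctree_fuel (k : nat) (x : seq int) : tree :=
  match k with
  | 0 => E
  | k'.+1 =>
    match x with
    | [::] => E
    | a :: s =>
      let i := index (minseq a s) x in
      N (ctree_fuel k' (take i x)) (ctree_fuel k' (drop i.+1 x))
    end
  end.

Definition ctree (x : seq int) : tree := ctree_fuel (size x) x.

(* tau x i: exchange x[i] and x[i+1] (1-based positions) *)
Definition tau (x : seq int) (i : nat) : seq int :=
  [seq (if j == i.-1 then nth 0%R x i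
        else if j == i then nth 0%R x i.-1
        else nth 0%R x j) | j <- iota 0 (size x)].

Definition ng_i (T : tree) (i : nat) (t : tree) : Prop :=
  exists x : seq int, uniq x /\ ctree x = T /\ ctree (tau x i) = t.

Definition ng (T : tree) (t : tree) : Prop :=
  exists i : nat, 1 <= i <= (tsize T).-1 /\ ng_i T i t.

(* Write a sequence with minimum [a] as [l ++ a :: r]; its Cartesian tree is
   [N (C l) (C r)].  A transposition inside [l] (or inside [r]) only acts on the
   left (right) subtree.  Exchanging [a] with its left neighbour [c], where
   [l = rcons l' c], yields [N (C l') (C (c :: r))]: the left subtree loses the
   last node of its right spine, and the right subtree gains a new node on its
   left spine, at any of the [llen R + 1] possible depths, depending on where
   [c] falls among the values of the left spine.  Exchanging [a] with its right
   neighbour is the mirror image.  For [T_(h+1) = N T_h T_h] these four families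
   are disjoint, so |ng(T_(h+1))| = 2 |ng(T_h)| + 2 (h + 2), whose solution is
   6 (2^h - 1) - 2h. *)

From Pilot Require Import Defs.
From mathcomp Require Import all_boot all_order all_algebra.
From mathcomp Require Import zify.
Set Implicit Arguments. Unset Strict Implicit. Unset Printing Implicit Defensive.
Import Order.TTheory GRing.Theory Num.Theory.

(* Without it, [tsize] would resolve to [tuple.tsize]. *)
Notation tsize := Defs.tsize.

(** * Cartesian trees of sequences *)

Lemma mem_minseq a s : minseq a s \in a :: s.
Proof.
elim: s => [|z s IH] /=; first exact: mem_head.
case: ifP => _; first by rewrite !inE eqxx orbT.
by move: IH; rewrite !inE => /orP[] ->; rewrite ?orbT.
Qed.

Lemma minseq_le a s y : y \in a :: s -> (minseq a s <= y)%R.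
Proof.
elim: s y => [|z s IH] y; first by rewrite inE => /eqP->.
rewrite [minseq _ _]/= -/(Order.min z (minseq a s)) ge_min !inE.
case/or3P=> [ya|/eqP->|ys]; first by rewrite IH ?orbT // inE ya.
  by rewrite lexx.
by rewrite IH ?orbT // inE ys orbT.
Qed.

Lemma ctree_fuel_eq k1 k2 x : size x <= k1 -> size x <= k2 ->
  ctree_fuel k1 x = ctree_fuel k2 x.
Proof.
elim: k1 k2 x => [|k1 IH] [|k2] [|a s] // le1 le2; cbn [ctree_fuel].
have : index (minseq a s) (a :: s) < size (a :: s) by rewrite index_mem mem_minseq.
move: (index _ _) => i lti; rewrite /= in le1 le2 lti.
by congr N; apply: IH; rewrite ?size_take_min ?size_drop /=; lia.
Qed.

Lemma ctree_cat (l r : seq int) (a : int) :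
  all (> a)%R (l ++ r) -> ctree (l ++ a :: r) = N (ctree l) (ctree r).
Proof.
move=> below; have [b [s Es]] : exists b s, l ++ a :: r = b :: s.
  by case: l {below} => [|c l]; do 2 eexists.
have min_a : minseq b s = a.
  have le_ma : (minseq b s <= a)%R by apply: minseq_le; rewrite -Es mem_cat mem_head orbT.
  have := mem_minseq b s; rewrite -Es mem_cat inE orbCA => /orP[/eqP//|].
  rewrite -mem_cat => m_lr.
  by have := allP below _ m_lr; rewrite ltNge le_ma.
have al : a \notin l.
  by apply/negP => al; have := allP below a; rewrite mem_cat al ltxx => /(_ isT).
rewrite /ctree Es -[size (b :: s)]/((size s).+1); cbn [ctree_fuel].
rewrite min_a -Es index_cat (negbTE al) /= eqxx addn0.
rewrite take_size_cat // -cat_rcons drop_size_cat ?size_rcons //.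
have := congr1 size Es; rewrite size_cat /= => sz.
by congr N; apply: ctree_fuel_eq; lia.
Qed.

Lemma ctree_ind (P : seq int -> Prop) :
  P [::] ->
  (forall (l r : seq int) (a : int), uniq (l ++ a :: r) -> all (> a)%R (l ++ r) ->
     P l -> P r -> P (l ++ a :: r)) ->
  forall x, uniq x -> P x.
Proof.
move=> P0 Pcat x; have [n] := ubnP (size x); elim: n x => // n IH [//|b s].
move: (minseq b s) (mem_minseq b s) (@minseq_le b s) => a ax min_a.
case/splitPr: ax min_a => l r min_a sz U.
have := U; rewrite (perm_uniq (permEl (perm_catCA l [:: a] r))) /= cat_uniq.
case/and4P=> a_lr Ul _ Ur.
have below : all (> a)%R (l ++ r).
  apply/allP => y ylr; rewrite lt_def (memPn a_lr) //= min_a //.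
  by rewrite mem_cat inE orbCA -mem_cat ylr orbT.
have [lt_l lt_r] : size l < n /\ size r < n by move: sz; rewrite size_cat /=; lia.
by apply: Pcat; try apply: IH.
Qed.

Lemma tsize_ctree (x : seq int) : uniq x -> tsize (ctree x) = size x.
Proof.
elim/ctree_ind=> // l r a _ below IHl IHr.
by rewrite ctree_cat //= IHl IHr size_cat addnS.
Qed.

Lemma ctree_eq_N (x : seq int) L R : uniq x -> ctree x = N L R ->
  exists l a r, [/\ x = l ++ a :: r, all (> a)%R (l ++ r), ctree l = L & ctree r = R].
Proof.
elim/ctree_ind=> // l r a _ below _ _.
by rewrite ctree_cat // => -[<- <-]; exists l, a, r.
Qed.

(** * Operations on binary trees *)

Fixpoint mirror (t : tree) : tree := if t is N l r then N (mirror r) (mirror l) else E.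

Lemma mirrorK : involutive mirror.
Proof. by elim=> //= l -> r ->. Qed.

Lemma tsize_mirror t : tsize (mirror t) = tsize t.
Proof. by elim: t => //= l -> r ->; rewrite addnC. Qed.

Lemma tsize_gt0 t : (0 < tsize t) = (t != E).
Proof. by case: t. Qed.

Fixpoint rlen (t : tree) : nat := if t is N _ r then (rlen r).+1 else 0.

(* [ins t k] hangs a new node below the first [k] nodes of the right spine of
   [t], the rest of the spine becoming its left subtree. *)
Fixpoint ins (t : tree) (k : nat) {struct k} : tree :=
  if k is k'.+1 then (if t is N l r then N l (ins r k') else N E E) else N t E.

Fixpoint remR (t : tree) : tree :=
  if t is N l r then (if r is E then l else N l (remR r)) else E.

Definition llen (t : tree) : nat := rlen (mirror t).
Definition insL (t : tree) (k : nat) : tree := mirror (ins (mirror t) k).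
Definition remL (t : tree) : tree := mirror (remR (mirror t)).

Lemma tsize_ins t k : tsize (ins t k) = (tsize t).+1.
Proof. by elim: t k => [|l _ r IHr] [|k] //=; rewrite ?IHr ?addn0 ?addnS. Qed.

Lemma remR_ins t k : remR (ins t k) = t.
Proof.
elim: t k => [|l _ r IHr] [|k] //=.
by have := tsize_ins r k; case: (ins r k) (IHr k) => //= ? ? ->.
Qed.

Lemma remL_insL t k : remL (insL t k) = t.
Proof. by rewrite /remL /insL mirrorK remR_ins mirrorK. Qed.

Lemma tsize_remR t : tsize (remR t) = (tsize t).-1.
Proof.
elim: t => [|l _ r IHr] //=.
by case: r IHr => [|rl rr] /= => [_|->]; rewrite ?addn0 ?addnS.
Qed.

Lemma ins_inj t k1 k2 : k1 <= rlen t -> k2 <= rlen t -> ins t k1 = ins t k2 -> k1 = k2.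
Proof.
elim: t k1 k2 => [|l _ r IHr] [|k1] [|k2] //= le1 le2.
- by move=> [/(congr1 tsize)] /=; lia.
- by move=> [/(congr1 tsize)] /=; lia.
- by move=> [eq_ins]; congr S; apply: IHr.
Qed.

Lemma ctree_map_mono (f : int -> int) (x : seq int) :
  {mono f : u v / (u < v)%R} -> uniq x -> ctree (map f x) = ctree x.
Proof.
move=> mono_f; elim/ctree_ind=> // l r a _ below IHl IHr.
rewrite map_cat /= !ctree_cat ?IHl ?IHr // -map_cat all_map.
by apply: sub_all below => y /=; rewrite mono_f.
Qed.

Lemma ctree_rev (x : seq int) : uniq x -> ctree (rev x) = mirror (ctree x).
Proof.
elim/ctree_ind=> // l r a _ below IHl IHr.
rewrite rev_cat rev_cons cat_rcons !ctree_cat ?IHl ?IHr //.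
by rewrite all_cat !all_rev andbC -all_cat.
Qed.

Lemma ctree_rcons (l : seq int) (c : int) : uniq (rcons l c) ->
  exists2 k, k <= rlen (ctree l) & ctree (rcons l c) = ins (ctree l) k.
Proof.
rewrite rcons_uniq => /andP[cl Ul]; move: Ul c cl.
elim/ctree_ind=> [c _|u v a U below _ IHv c].
  by exists 0; rewrite // -[[:: c]]/([::] ++ c :: [::]) ctree_cat.
rewrite mem_cat inE !negb_or => /and3P[_ ca cv].
have E_uav := ctree_cat below.
case: (ltgtP c a) => [lt_ca|lt_ac|eq_ca]; last by rewrite eq_ca eqxx in ca.
- exists 0 => //; rewrite -cats1 ctree_cat ?cats0; first by [].
  apply/allP => y; rewrite mem_cat inE => /or3P[yu|/eqP->//|yv].
    by apply: lt_trans lt_ca _; apply: (allP below); rewrite mem_cat yu.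
  by apply: lt_trans lt_ca _; apply: (allP below); rewrite mem_cat yv orbT.
- have [k le_k Ek] := IHv c cv.
  exists k.+1; first by rewrite E_uav.
  rewrite rcons_cat rcons_cons ctree_cat ?Ek ?E_uav //.
  by rewrite all_cat all_rcons lt_ac -all_cat.
Qed.

Lemma ctree_cons (c : int) (r : seq int) : uniq (c :: r) ->
  exists2 k, k <= llen (ctree r) & ctree (c :: r) = insL (ctree r) k.
Proof.
move=> U; have Ur : uniq r by case/andP: U.
have Urev : uniq (rcons (rev r) c) by rewrite rcons_uniq mem_rev rev_uniq.
have [k le_k Ek] := ctree_rcons Urev.
exists k; first by rewrite /llen -ctree_rev.
by rewrite -[c :: r]revK rev_cons ctree_rev ?rev_uniq // Ek ctree_rev // /insL mirrorK.
Qed.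

Lemma remR_ctree_rcons (l : seq int) (c : int) :
  uniq (rcons l c) -> remR (ctree (rcons l c)) = ctree l.
Proof. by case/ctree_rcons=> k _ ->; rewrite remR_ins. Qed.

Lemma remL_ctree_cons (c : int) (r : seq int) :
  uniq (c :: r) -> remL (ctree (c :: r)) = ctree r.
Proof. by case/ctree_cons=> k _ ->; rewrite remL_insL. Qed.

(** * Adjacent transpositions *)

Lemma size_tau (x : seq int) i : size (tau x i) = size x.
Proof. by rewrite size_map size_iota. Qed.

Lemma nth_tau (x : seq int) i j : j < size x ->
  nth 0%R (tau x i) j = nth 0%R x (if j == i.-1 then i else if j == i then i.-1 else j).
Proof.
move=> lt_jx; rewrite (nth_map 0) ?size_iota // (nth_iota 0 0 lt_jx) add0n.
by case: eqP => // _; case: eqP.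
Qed.

Lemma tau_mid (u w : seq int) (b c : int) :
  tau (u ++ b :: c :: w) (size u).+1 = u ++ c :: b :: w.
Proof.
apply: (@eq_from_nth _ 0%R) => [|j]; first by rewrite size_tau !size_cat.
rewrite size_tau => lt_j; rewrite nth_tau //= !nth_cat.
case: (ltngtP j (size u)) => [lt_ju|gt_ju|->].
- by rewrite ltn_eqF ?lt_ju // ltnS ltnW.
- case: eqP => [->|ne]; first by rewrite ltnn subnn subSnn.
  rewrite ltnNge (ltnW gt_ju) /=.
  by have [m ->] : exists m, j - size u = m.+2 by exists (j - size u).-2; lia.
- by rewrite ltnNge leqnSn subSnn subnn.
Qed.

Lemma split_adjacent (s : seq int) i : 0 < i < size s ->
  exists u b c w, s = u ++ b :: c :: w /\ size u = i.-1.
Proof.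
move=> /andP[i_gt0 lt_is]; exists (take i.-1 s).
have := size_drop i.-1 s; have := cat_take_drop i.-1 s.
case: (drop i.-1 s) => [|b [|c w]] Es /= sz; try lia.
by exists b, c, w; rewrite size_takel //; lia.
Qed.

Lemma tau_catl (l r : seq int) i : 0 < i < size l -> tau (l ++ r) i = tau l i ++ r.
Proof.
move=> lt_il; have [u [b [c [w [El sz]]]]] := split_adjacent lt_il.
have -> : i = (size u).+1 by lia.
rewrite {}El.
by rewrite -catA !tau_mid -catA.
Qed.

Lemma perm_tau (s : seq int) i : 0 < i < size s -> perm_eq (tau s i) s.
Proof.
move=> lt_is; have [u [b [c [w [-> sz]]]]] := split_adjacent lt_is.
have -> : i = (size u).+1 by lia.
by rewrite tau_mid perm_cat2l (perm_catCA [:: c] [:: b] w).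
Qed.

Lemma tau_rev (s : seq int) i : 0 < i < size s ->
  tau (rev s) (size s - i) = rev (tau s i).
Proof.
move=> lt_is; have [u [b [c [w [Es sz]]]]] := split_adjacent lt_is.
have rev_mid x y : rev (u ++ x :: y :: w) = rev w ++ y :: x :: rev u.
  by rewrite rev_cat !rev_cons -!cats1 -!catA.
have -> : size s - i = (size (rev w)).+1 by rewrite Es size_cat size_rev /=; lia.
have -> : i = (size u).+1 by lia.
by rewrite Es rev_mid tau_mid tau_mid rev_mid.
Qed.

(** * Realizing trees by sequences *)

Lemma exists_norm_bound (s : seq int) :
  exists M : int, (0 < M)%R /\ all (fun z => `|z| < M)%R s.
Proof.
elim: s => [|z s [M [M_gt0 bound]]]; first by exists 1%R.
exists (M + `|z|)%R; split; first lia.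
by apply/andP; split; [lia | apply: sub_all bound => y /=; lia].
Qed.

Lemma exists_lt_all (s : seq int) : exists a : int, all (> a)%R s.
Proof.
have [M [_ bound]] := exists_norm_bound s.
by exists (- M)%R; apply: sub_all bound => y /=; lia.
Qed.

(* An affine map whose slope exceeds the spread of [F] around [c]. *)
Lemma relabel_pinned (F : seq int) (c0 c : int) :
  exists f : int -> int,
    [/\ {mono f : u v / (u < v)%R}, f c0 = c & forall y, y != c0 -> f y \notin F].
Proof.
have [M [M_gt0 bound]] := exists_norm_bound [seq z - c | z <- F]%R.
exists (fun y => c + M * (y - c0))%R; split.
- by move=> u v; rewrite ltrD2l ltr_pM2l // ltrD2r.
- by rewrite subrr mulr0 addr0.
- move=> y /eqP y_c0; apply/negP => /(map_f (fun z => z - c)%R) /(allP bound) /=.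
  nia.
Qed.

Lemma notin_lt_all (a : int) (s : seq int) : all (> a)%R s -> a \notin s.
Proof. by move=> below; apply/negP => /(allP below); rewrite ltxx. Qed.

Lemma uniq_join (l r : seq int) (a : int) : uniq l -> uniq r ->
  {in r, forall y, y \notin l} -> all (> a)%R (l ++ r) -> uniq (l ++ a :: r).
Proof.
move=> Ul Ur lr; rewrite all_cat => /andP[al ar].
by rewrite cat_uniq Ul /= negb_or !notin_lt_all // Ur !andbT; apply/hasPn.
Qed.

Lemma realize_avoid (T : tree) (F : seq int) :
  exists x, [/\ uniq x, ctree x = T & {in x, forall y, y \notin F}].
Proof.
elim: T F => [|L IHL R IHR] F; first by exists [::].
have [xl [Ul Cl Fl]] := IHL F.
have [xr [Ur Cr Fr]] := IHR (xl ++ F).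
have [a] := exists_lt_all (F ++ xl ++ xr); rewrite !all_cat => /and3P[aF al ar].
have {}Fr y : y \in xr -> (y \notin xl) && (y \notin F).
  by move/Fr; rewrite mem_cat negb_or.
exists (xl ++ a :: xr); split.
- by apply: uniq_join; rewrite ?all_cat ?al // => y /Fr /andP[].
- by rewrite ctree_cat ?Cl ?Cr // all_cat al.
- move=> y; rewrite mem_cat inE => /or3P[/Fl //|/eqP->|/Fr /andP[] //].
  exact: notin_lt_all.
Qed.

Lemma realize_cons (T : tree) (c : int) (F : seq int) : T != E ->
  exists r, [/\ uniq (c :: r), ctree (c :: r) = T & {in r, forall y, y \notin F}].
Proof.
move=> T_neq0; have [[|c0 r0] [U0 C0 _]] := realize_avoid T [::].
  by rewrite -C0 in T_neq0.
have [f [mono_f f_c0 f_F]] := relabel_pinned F c0 c.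
have inj_f : injective f by apply/inc_inj/le_mono => u v; rewrite mono_f.
exists (map f r0); rewrite -f_c0 -map_cons map_inj_uniq // ctree_map_mono //; split=> //.
move=> _ /mapP[y y_r0 ->]; apply: f_F; apply: contraTneq y_r0 => ->.
by case/andP: U0.
Qed.

(** * Neighbours of a tree *)

Lemma ctree_tau_catl (l r : seq int) (a : int) i : 0 < i < size l ->
  all (> a)%R (l ++ r) -> ctree (tau (l ++ a :: r) i) = N (ctree (tau l i)) (ctree r).
Proof.
move=> lt_il below; rewrite tau_catl // ctree_cat //.
by rewrite all_cat (perm_all _ (perm_tau lt_il)) -all_cat.
Qed.

Lemma ctree_tau_rootl (l r : seq int) (a c : int) : all (> a)%R (rcons l c ++ r) ->
  ctree (tau (rcons l c ++ a :: r) (size l).+1) = N (ctree l) (ctree (c :: r)).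
Proof. by rewrite !cat_rcons tau_mid => /ctree_cat. Qed.

Lemma ng_i_left L R i t : 0 < i < tsize L ->
  ng_i (N L R) i t <-> exists2 l, ng_i L i l & t = N l R.
Proof.
move=> lt_iL; split=> [[x [Ux [Cx <-]]] | [l [xl [Ul [Cl Tl]]] ->]].
  have [l [a [r [Ex below Cl Cr]]]] := ctree_eq_N Ux Cx; subst x.
  have Ul : uniq l by move: Ux; rewrite cat_uniq => /andP[].
  have lt_il : 0 < i < size l by rewrite -(tsize_ctree Ul) Cl.
  by exists (ctree (tau l i)); [exists l | rewrite ctree_tau_catl ?Cr].
have [xr [Ur Cr lr]] := realize_avoid R xl.
have [a below] := exists_lt_all (xl ++ xr).
have lt_il : 0 < i < size xl by rewrite -(tsize_ctree Ul) Cl.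
exists (xl ++ a :: xr); split; first exact: uniq_join.
by rewrite ctree_cat // ctree_tau_catl // Cl Cr Tl.
Qed.

Lemma ng_i_rootl L R t : L != E ->
  ng_i (N L R) (tsize L) t <-> exists2 k, k <= llen R & t = N (remR L) (insL R k).
Proof.
move=> L_neqE; split=> [[x [Ux [Cx <-]]] | [k le_k ->]].
  have [l [a [r [Ex below Cl Cr]]]] := ctree_eq_N Ux Cx; subst x.
  case/lastP: l Ux below Cl {Cx} => [|l c] Ux below Cl; first by rewrite -Cl in L_neqE.
  have Ulc : uniq (rcons l c) by move: Ux; rewrite cat_uniq => /andP[].
  have Ucr : uniq (c :: r).
    move: Ux; rewrite cat_rcons cat_uniq /= !inE !negb_or.
    by case/and3P=> _ _ /and3P[/andP[_ ->] _ ->].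
  have [k le_k Ek] := ctree_cons Ucr.
  have -> : tsize L = (size l).+1 by rewrite -Cl tsize_ctree // size_rcons.
  by exists k; rewrite -Cr // ctree_tau_rootl // Ek -Cl remR_ctree_rcons.
have [x [Ux Cx _]] := realize_avoid L [::].
case/lastP: x Ux Cx => [|l c] Ulc Cl; first by rewrite -Cl in L_neqE.
have insL_neqE : insL R k != E by rewrite /insL; case: k {le_k}; case: (mirror R).
have [r [Ucr Ccr lr]] := realize_cons c l insL_neqE.
have [a below] := exists_lt_all (rcons l c ++ r).
have Cr : ctree r = R by rewrite -(remL_ctree_cons Ucr) Ccr remL_insL.
have -> : tsize L = (size l).+1 by rewrite -Cl tsize_ctree // size_rcons.
exists (rcons l c ++ a :: r); split.
  apply: uniq_join => //; first by case/andP: Ucr.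
  move=> y yr; rewrite mem_rcons inE negb_or lr // andbT.
  by apply: contraTneq yr => ->; case/andP: Ucr.
by rewrite ctree_cat // ctree_tau_rootl // Ccr -Cl remR_ctree_rcons // Cl Cr.
Qed.

Lemma ng_i_mirror T i t : 0 < i < tsize T ->
  ng_i T i t -> ng_i (mirror T) (tsize T - i) (mirror t).
Proof.
move=> lt_iT [x [Ux [Cx <-]]].
have sz : tsize T = size x by rewrite -Cx tsize_ctree.
have lt_ix : 0 < i < size x by rewrite -sz.
exists (rev x); rewrite rev_uniq ctree_rev // Cx sz tau_rev //.
by rewrite ctree_rev // (perm_uniq (perm_tau lt_ix)).
Qed.

Lemma ng_i_mirrorE T i t : 0 < i < tsize T ->
  ng_i T i t <-> ng_i (mirror T) (tsize T - i) (mirror t).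
Proof.
move=> lt_iT; split; first exact: ng_i_mirror.
have lt_iT' : 0 < tsize T - i < tsize (mirror T) by rewrite tsize_mirror; lia.
move/(ng_i_mirror lt_iT'); rewrite !mirrorK tsize_mirror.
by have -> : tsize T - (tsize T - i) = i by lia.
Qed.

Lemma ng_i_right L R i t : (tsize L).+1 < i < tsize (N L R) ->
  ng_i (N L R) i t <-> exists2 r, ng_i R (i - (tsize L).+1) r & t = N L r.
Proof.
move=> lt_i; set j := i - (tsize L).+1.
have lt_jR : 0 < j < tsize R by move: lt_i => /=; lia.
rewrite ng_i_mirrorE; last by lia.
have -> : tsize (N L R) - i = tsize R - j by rewrite /= /j; lia.
rewrite [mirror (N L R)]/= ng_i_left ?tsize_mirror; last by lia.
split=> [[r' Hr' Et] | [r Hr ->]].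
  exists (mirror r'); last by rewrite -[t]mirrorK Et /= mirrorK.
  by rewrite ng_i_mirrorE // mirrorK.
by exists (mirror r); rewrite // -ng_i_mirrorE.
Qed.

Lemma ng_i_rootr L R t : R != E ->
  ng_i (N L R) (tsize L).+1 t <-> exists2 k, k <= rlen L & t = N (ins L k) (remL R).
Proof.
move=> R_neqE; rewrite ng_i_mirrorE /=; last by rewrite -tsize_gt0 in R_neqE; lia.
have -> : (tsize L + tsize R).+1 - (tsize L).+1 = tsize (mirror R).
  by rewrite tsize_mirror; lia.
rewrite ng_i_rootl; last by apply: contra_neq R_neqE => /(congr1 mirror); rewrite mirrorK.
rewrite /llen /insL /remL mirrorK; split=> -[k le_k Et]; exists k => //.
  by rewrite -[t]mirrorK Et /= mirrorK.
by rewrite Et /= mirrorK.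
Qed.

Lemma ng_N L R t : ng (N L R) t <->
  [\/ exists2 l, ng L l & t = N l R,
      exists2 r, ng R r & t = N L r,
      L != E /\ exists2 k, k <= llen R & t = N (remR L) (insL R k)
    | R != E /\ exists2 k, k <= rlen L & t = N (ins L k) (remL R)].
Proof.
split=> [[i [lt_i ng_t]] | ].
  rewrite /= in lt_i; case: (ltngtP i (tsize L)) => [lt_iL | lt_Li | eq_iL].
  - move: ng_t; rewrite ng_i_left; last by lia.
    by case=> l ng_l ->; apply: Or41; exists l => //; exists i; split=> //; lia.
  - case: (i =P (tsize L).+1) => [eq_i | ne_i].
      have R_neqE : R != E by rewrite -tsize_gt0; lia.
      by move: ng_t; rewrite eq_i ng_i_rootr // => ?; apply: Or44.
    move: ng_t; rewrite ng_i_right; last by rewrite /=; lia.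
    case=> r ng_r ->; apply: Or42; exists r => //.
    by exists (i - (tsize L).+1); split=> //; lia.
  - have L_neqE : L != E by rewrite -tsize_gt0; lia.
    by move: ng_t; rewrite eq_iL ng_i_rootl // => ?; apply: Or43.
case=> [[l [i [lt_i ng_l]] ->] | [r [i [lt_i ng_r]] ->] | [L_neqE ng_t] | [R_neqE ng_t]].
- exists i; split; first by rewrite /=; lia.
  by rewrite ng_i_left; [exists l | lia].
- exists (i + (tsize L).+1); split; first by rewrite /=; lia.
  by rewrite ng_i_right ?addnK; [exists r | rewrite /=; lia].
- exists (tsize L); split; last by rewrite ng_i_rootl.
  by move: L_neqE; rewrite -tsize_gt0 /=; lia.
- exists (tsize L).+1; split; last by rewrite ng_i_rootr.
  by move: R_neqE; rewrite -tsize_gt0 /=; lia.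
Qed.

Lemma ng_tsize T t : ng T t -> tsize t = tsize T.
Proof.
case=> i [lt_i [x [Ux [Cx <-]]]].
have lt_ix : 0 < i < size x by rewrite -(tsize_ctree Ux) Cx; lia.
by rewrite tsize_ctree ?size_tau -?Cx ?tsize_ctree // (perm_uniq (perm_tau lt_ix)).
Qed.

Lemma ng_neq T t : ng T t -> t != T.
Proof.
elim: T t => [|L IHL R IHR] t; first by case=> i [/= lt_i _]; lia.
case/ng_N=> [[l /IHL + ->] | [r /IHR + ->] | [L_neqE [k _ ->]] | [_ [k _ ->]]].
- by apply: contra_neq => -[].
- by apply: contra_neq => -[].
- apply/eqP => -[/(congr1 tsize)]; rewrite tsize_remR.
  by move: L_neqE; rewrite -tsize_gt0; lia.
- by apply/eqP => -[/(congr1 tsize)]; rewrite tsize_ins; lia.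
Qed.

(** * Complete binary trees *)

Lemma mirror_complete h : mirror (complete h) = complete h.
Proof. by elim: h => //= h ->. Qed.

Lemma rlen_complete h : rlen (complete h) = h.+1.
Proof. by elim: h => //= h ->. Qed.

Lemma llen_complete h : llen (complete h) = h.+1.
Proof. by rewrite /llen mirror_complete rlen_complete. Qed.

Definition ng_step (T : tree) (s : seq tree) : seq tree :=
  [seq N l T | l <- s] ++ [seq N T r | r <- s] ++
  [seq N (remR T) (insL T k) | k <- iota 0 (llen T).+1] ++
  [seq N (ins T k) (remL T) | k <- iota 0 (rlen T).+1].

Lemma mem_ng_step T s t : T != E -> (forall u, u \in s <-> ng T u) ->
  t \in ng_step T s <-> ng (N T T) t.
Proof.
move=> T_neqE mem_s; rewrite ng_N !mem_cat; split.
  case/or4P=> /mapP[u u_in ->].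
  - by apply: Or41; exists u; rewrite -?mem_s.
  - by apply: Or42; exists u; rewrite -?mem_s.
  - by apply: Or43; split=> //; exists u; rewrite mem_iota in u_in.
  - by apply: Or44; split=> //; exists u; rewrite mem_iota in u_in.
case=> [[l /mem_s l_in ->] | [r /mem_s r_in ->] | [_ [k le_k ->]] | [_ [k le_k ->]]].
- by rewrite map_f.
- by rewrite map_f ?orbT.
- by rewrite map_f ?orbT // mem_iota.
- by rewrite map_f ?orbT // mem_iota.
Qed.

Lemma uniq_ng_step T s : T != E -> (forall u, u \in s <-> ng T u) -> uniq s ->
  uniq (ng_step T s).
Proof.
move=> T_neqE mem_s Us; have T_gt0 : 0 < tsize T by rewrite tsize_gt0.
have ng_T u : u \in s -> tsize u = tsize T /\ u != T.
  by move/mem_s => ng_u; rewrite (ng_tsize ng_u) (ng_neq ng_u).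
have disjoint_maps (X Y : eqType) (f : X -> tree) (g : Y -> tree) a b :
    {in a & b, forall x y, f x != g y} -> has (mem (map f a)) (map g b) = false.
  move=> fg; apply/negbTE/hasPn => _ /mapP[y y_b ->].
  apply/mapP => -[x x_a /esym/eqP].
  by rewrite (negbTE (fg x y x_a y_b)).
have uniq_map_iota (f : nat -> tree) n :
    {in gtn n.+1 &, injective f} -> uniq [seq f k | k <- iota 0 n.+1].
  move=> inj_f; rewrite map_inj_in_uniq ?iota_uniq // => k1 k2.
  by rewrite !mem_iota; apply: inj_f.
rewrite /ng_step !cat_uniq !has_cat !uniq_map_iota ?map_inj_uniq ?Us; first last.
- by move=> k1 k2 le1 le2 [] /(congr1 mirror); rewrite !mirrorK; apply: ins_inj.
- by move=> k1 k2 le1 le2 []; apply: ins_inj.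
- by move=> ? ? [].
- by move=> ? ? [].
rewrite !disjoint_maps // => [|||||l r /ng_T[_ l_neq] _].
6: by apply: contra_neq l_neq => -[].
(* The other pairs of blocks differ in the size of the left subtree. *)
all: move=> x y x_in _; apply/eqP => -[/(congr1 tsize)].
all: by try rewrite (ng_T _ x_in).1; rewrite ?tsize_remR ?tsize_ins; lia.
Qed.

Fixpoint ng_complete (h : nat) : seq tree :=
  if h is h'.+1 then ng_step (complete h') (ng_complete h') else [::].

Lemma mem_ng_complete h t : t \in ng_complete h <-> ng (complete h) t.
Proof.
elim: h t => [|h IH] t; first by split=> // -[i [/= lt_i _]]; lia.
by apply: mem_ng_step; [case: (h) | exact: IH].
Qed.

Lemma uniq_ng_complete h : uniq (ng_complete h).
Proof.
elim: h => // h IH; apply: uniq_ng_step => //; first by case: (h).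
exact: mem_ng_complete.
Qed.

Lemma size_ng_step T s : size (ng_step T s) = 2 * size s + (llen T).+1 + (rlen T).+1.
Proof. by rewrite !size_cat !size_map !size_iota; lia. Qed.

Lemma size_ng_complete h : size (ng_complete h) = 6 * (2 ^ h - 1) - 2 * h.
Proof.
elim: h => // h IH; rewrite /= size_ng_step llen_complete rlen_complete IH expnS.
by have := ltn_expl h (ltnSn 1); lia.
Qed.

Theorem lemma9 (h : nat) : 0 < h ->
  exists s : seq tree,
    uniq s /\ (forall t : tree, t \in s <-> ng (complete h) t) /\
    size s = 6 * (2 ^ h - 1) - 2 * h.
Proof.
(* The count also holds for h = 0, where both sides vanish. *)
move=> _; exists (ng_complete h); split; first exact: uniq_ng_complete.
by split; [exact: mem_ng_complete | exact: size_ng_complete].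
Qed.
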